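(* Let $\mathcal{G}=(\mathcal{V},\mathcal{E},\mathbf{X})\sim \mathrm{CSBM}(n,p,q,\mathbb{P}_1,\mathbb{P}_{-1})$ with $p,q\in(0,1)$, where $\mathbb{P}_{1},\mathbb{P}_{-1}$ have densities (also denoted $\mathbb{P}_{1},\mathbb{P}_{-1}$). Fix a node $v$ with neighbor set $\mathcal{N}_v$. Consider the MAP estimator of $Y_v$ given $X_v$, $\{X_u\}_{u\in\mathcal{N}_v}$ and $\mathcal{N}_v$, $$f^*(X_v,\{X_u\}_{u\in\mathcal{N}_v})=\arg\max_{Y_v\in\{-1,1\}}\max_{Y_u\in\{-1,1\},\,\forall u\in\mathcal{N}_v}\pi_{Y_v,\{Y_u\}_{u\in\mathcal{N}_v}}\,\mathbb{P}\big(X_v,\{X_u\}_{u\in\mathcal{N}_v},\mathcal{N}_v\,\big|\,Y_v,\{Y_u\}_{u\in\mathcal{N}_v}\big),$$ where $\pi$ denotes the prior of the labels. Then the optimal (MAP) classifier is $f^*=\mathrm{sgn}(\mathcal{P}_v)$, where $$\mathcal{P}_v=\psi(X_v;\mathbb{P}_1,\mathbb{P}_{-1})+\sum_{u\in\mathcal{N}_v}\phi\big(\psi(X_u;\mathbb{P}_1,\mathbb{P}_{-1});\log(p/q)\big),$$ with $\psi(a;\mathbb{P}_1,\mathbb{P}_{-1})=\log\frac{\mathbb{P}_1(a)}{\mathbb{P}_{-1}(a)}$ and $\phi(a;b)=\mathrm{ReLU}(a+b)-\mathrm{ReLU}(a-b)-b$.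
   Context: $\mathrm{CSBM}(n,p,q,\mathbb{P}_1,\mathbb{P}_{-1})$ (contextual stochastic block model): there are $n$ nodes $\mathcal{V}=[n]$; each node $v$ independently gets a label $Y_v\in\{-1,1\}$ uniformly at random (Rademacher); given $Y_v$, the attribute $X_v$ is drawn from $\mathbb{P}_{Y_v}$; for two nodes $u,v$, an edge is present with probability $p$ if $Y_u=Y_v$ and with probability $q$ if $Y_u\neq Y_v$; all attributes and edges are mutually independent given the labels $\mathbf{Y}$. $\mathrm{ReLU}(x)=\max\{x,0\}$. *)

From HB Require Import structures.
From mathcomp Require Import all_boot all_order all_algebra.
From mathcomp Require Import all_classical all_reals.
From mathcomp Require Import exp.
Set Implicit Arguments. Unset Strict Implicit. Unset Printing Implicit Defensive.
Import Order.TTheory GRing.Theory Num.Theory.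
Local Open Scope ring_scope.

Section CSBM.
Variables (R : realType) (T : Type) (n : nat).

(* Labels are encoded as booleans: true <-> +1, false <-> -1. *)
Definition lab (b : bool) : R := if b then 1 else -1.

Definition dens (P1 Pm1 : T -> R) (b : bool) (a : T) : R :=
  if b then P1 a else Pm1 a.

Definition edgep (p q : R) (a b : bool) : R := if a == b then p else q.

(* Joint density, given the FULL label vector y, of the observations
   (X_v, {X_u}_{u in S}) evaluated at x, together with the event N_v = S:
   attributes independent with densities P_{Y_w}, and each u <> v is a
   neighbour of v independently with probability p (same label) or q. *)
Definition cond_lik (P1 Pm1 : T -> R) (p q : R) (v : 'I_n) (S : {set 'I_n})
    (x : 'I_n -> T) (y : {ffun 'I_n -> bool}) : R :=
  (\prod_(w in v |: S) dens P1 Pm1 (y w) (x w)) *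
  \prod_(u : 'I_n | u != v)
     (if u \in S then edgep p q (y u) (y v) else 1 - edgep p q (y u) (y v)).

(* pi_{Y_v, Y_S} * P(X_v, X_S, N_v = S | Y_v, Y_S): the joint of the labels
   of v and of its neighbours with the observations, obtained by
   marginalising the (uniform, independent) labels of all other nodes. *)
Definition joint_post (P1 Pm1 : T -> R) (p q : R) (v : 'I_n) (S : {set 'I_n})
    (x : 'I_n -> T) (yv : bool) (yS : {ffun 'I_n -> bool}) : R :=
  (2%:R ^- n) *
  \sum_(y : {ffun 'I_n -> bool} | (y v == yv) && [forall u in S, y u == yS u])
     cond_lik P1 Pm1 p q v S x y.

(* MAP objective for Y_v: maximum over the labels of the neighbours
   (only the values of yS on S matter; all values are >= 0). *)
Definition map_obj (P1 Pm1 : T -> R) (p q : R) (v : 'I_n) (S : {set 'I_n})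
    (x : 'I_n -> T) (yv : bool) : R :=
  \big[Num.max/0]_(yS : {ffun 'I_n -> bool}) joint_post P1 Pm1 p q v S x yv yS.

(* The MAP classifier f*, as a sign: +1 if argmax = {1}, -1 if argmax = {-1},
   0 in case of a tie. *)
Definition map_classifier (P1 Pm1 : T -> R) (p q : R) (v : 'I_n)
    (S : {set 'I_n}) (x : 'I_n -> T) : R :=
  Num.sg (map_obj P1 Pm1 p q v S x true - map_obj P1 Pm1 p q v S x false).

Definition ReLU (a : R) : R := Num.max a 0.

Definition psi (P1 Pm1 : T -> R) (a : T) : R := ln (P1 a / Pm1 a).

Definition phi (a b : R) : R := ReLU (a + b) - ReLU (a - b) - b.

Definition calP (P1 Pm1 : T -> R) (p q : R) (v : 'I_n) (S : {set 'I_n})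
    (x : 'I_n -> T) : R :=
  psi P1 Pm1 (x v) + \sum_(u in S) phi (psi P1 Pm1 (x u)) (ln (p / q)).

End CSBM.

From mathcomp Require Import all_boot all_order all_algebra.
From mathcomp Require Import all_classical all_reals.
From mathcomp Require Import exp lra.
Import Order.TTheory GRing.Theory Num.Theory.
Local Open Scope ring_scope.

(* Given the labels, the likelihood factorises over the nodes.  Summing out
   the labels of the nodes outside {v} ∪ N_v leaves, for each node, a factor
   that depends only on Y_v and on that node's own label, so the maximum over
   the neighbours' labels is taken node by node.  In the log-ratio of the two
   maxima, v contributes psi(X_v), a non-neighbour contributes 0, and a
   neighbour u contributes
     ln max(P_1 p, P_-1 q) - ln max(P_1 q, P_-1 p) = phi(psi(X_u); ln(p/q)). *)

Section RealFacts.
Variable R : realType.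

Lemma bigmax_ffun_prod (I : finType) (c : R) (G : I -> bool -> R) :
  0 <= c -> (forall i b, 0 <= G i b) ->
  \big[Num.max/0]_(f : {ffun I -> bool}) (c * \prod_i G i (f i)) =
  c * \prod_i Num.max (G i true) (G i false).
Proof.
move=> c_ge0 G_ge0; apply/eqP; rewrite eq_le; apply/andP; split.
  apply: bigmax_le => [|f _].
    by rewrite mulr_ge0 // prodr_ge0 // => i _; rewrite le_max G_ge0.
  rewrite ler_wpM2l // ler_prod // => i _.
  by rewrite G_ge0 /=; case: (f i); rewrite le_max lexx ?orbT.
pose f0 : {ffun I -> bool} := [ffun i => G i false <= G i true].
have -> : \prod_i Num.max (G i true) (G i false) = \prod_i G i (f0 i).
  by apply: eq_bigr => i _; rewrite ffunE; case: lerP.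
exact: (le_bigmax _ (fun f : {ffun I -> bool} => c * \prod_i G i (f i)) f0).
Qed.

Lemma ln_prod (I : Type) (r : seq I) (P : pred I) (F : I -> R) :
  (forall i, 0 < F i) ->
  ln (\prod_(i <- r | P i) F i) = \sum_(i <- r | P i) ln (F i).
Proof.
move=> F_gt0.
suff [] : 0 < \prod_(i <- r | P i) F i /\
          ln (\prod_(i <- r | P i) F i) = \sum_(i <- r | P i) ln (F i) by [].
apply: (big_rec2 (fun a s => 0 < a /\ ln a = s)); first by rewrite ln1.
move=> i a s _ [a_gt0 <-]; split; first by rewrite mulr_gt0.
by rewrite lnM // posrE.
Qed.

Lemma ln_max (a b : R) : 0 < a -> 0 < b -> ln (Num.max a b) = Num.max (ln a) (ln b).
Proof.
move=> a_gt0 b_gt0; case: (lerP a b) => [le_ab|lt_ba].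
  by rewrite max_r // ler_ln // posrE.
by rewrite max_l // ler_ln ?posrE // ltW.
Qed.

Lemma sgr_ln_sub (a b : R) : 0 < a -> 0 < b -> Num.sg (ln a - ln b) = Num.sg (a - b).
Proof.
move=> a_gt0 b_gt0; case: (ltrgtP a b) => [lt_ab|lt_ba|->]; last by rewrite !subrr.
  by rewrite !ltr0_sg ?subr_lt0 // ltr_ln ?posrE.
by rewrite !gtr0_sg ?subr_gt0 // ltr_ln ?posrE.
Qed.

Lemma max_addr_sub_phi (a b c d : R) :
  Num.max (a + c) (b + d) - Num.max (a + d) (b + c) = phi (a - b) (c - d).
Proof.
rewrite /phi /ReLU.
case: (lerP (a + c) (b + d)); case: (lerP (a + d) (b + c));
case: (lerP (a - b + (c - d)) 0); case: (lerP (a - b - (c - d)) 0); lra.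
Qed.

End RealFacts.

Section Likelihood.
Context {R : realType} {T : Type} {n : nat}.
Variables (P1 Pm1 : T -> R) (p q : R) (v : 'I_n) (S : {set 'I_n}) (x : 'I_n -> T).
Hypotheses (p_in01 : 0 < p < 1) (q_in01 : 0 < q < 1) (vNS : v \notin S).
Hypotheses (P1_gt0 : forall w, w \in v |: S -> 0 < P1 (x w))
           (Pm1_gt0 : forall w, w \in v |: S -> 0 < Pm1 (x w)).

Definition site_lik (yv : bool) (u : 'I_n) (b : bool) : R :=
  if u == v then dens P1 Pm1 yv (x v)
  else if u \in S then dens P1 Pm1 b (x u) * edgep p q b yv
  else 1 - edgep p q b yv.

Definition site_factor (yv : bool) (u : 'I_n) (b : bool) : R :=
  if (u == v) || (u \in S) then site_lik yv u b else \sum_b' site_lik yv u b'.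

Definition site_max (yv : bool) (u : 'I_n) : R :=
  Num.max (site_factor yv u true) (site_factor yv u false).

Lemma cond_lik_site (y : {ffun 'I_n -> bool}) :
  cond_lik P1 Pm1 p q v S x y = \prod_u site_lik (y v) u (y u).
Proof.
rewrite /cond_lik (big_setU1 _ vNS) /= [RHS](bigD1 v) //= {1}/site_lik eqxx -mulrA.
congr (_ * _).
have restrict_S : \prod_(u in S) dens P1 Pm1 (y u) (x u) =
    \prod_(u | u != v) (if u \in S then dens P1 Pm1 (y u) (x u) else 1).
  rewrite -big_mkcondr /=; apply: eq_bigl => u.
  by case: eqP => [->|_]; rewrite ?(negbTE vNS) ?andbT.
rewrite restrict_S -big_split /=; apply: eq_bigr => u /negbTE uNv.
by rewrite /site_lik uNv; case: ifP; rewrite ?mul1r.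
Qed.

Lemma joint_post_factor (yv : bool) (yS : {ffun 'I_n -> bool}) :
  joint_post P1 Pm1 p q v S x yv yS = 2%:R ^- n * \prod_u site_factor yv u (yS u).
Proof.
rewrite /joint_post; congr (_ * _).
pose Q (u : 'I_n) (b : bool) : bool :=
  if u == v then b == yv else if u \in S then b == yS u else true.
have observed_family (y : {ffun 'I_n -> bool}) :
    (y v == yv) && [forall u in S, y u == yS u] = (y \in family Q).
  apply/andP/familyP => [[/eqP yvE /forall_inP yS_E] u|yQ].
    rewrite unfold_in /Q; case: eqP => [->|_]; first by rewrite yvE.
    by case: ifP => // /yS_E.
  split; first by have := yQ v; rewrite unfold_in /Q eqxx.
  apply/forall_inP => u uS; have := yQ u; rewrite unfold_in /Q uS.
  by case: eqP => // uv; move: vNS; rewrite -uv uS.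
rewrite (eq_bigr (fun y : {ffun 'I_n -> bool} => \prod_u site_lik yv u (y u))); last first.
  by move=> y /andP[/eqP <- _]; exact: cond_lik_site.
rewrite (eq_bigl _ _ observed_family) -bigA_distr_big_dep.
apply: eq_bigr => u _; rewrite /Q /site_factor.
case: eqP => [->|_] /=; first by rewrite big_pred1_eq /site_lik eqxx.
by case: ifP => _; first exact: big_pred1_eq.
Qed.

Lemma site_factor_gt0 (yv : bool) (u : 'I_n) (b : bool) : 0 < site_factor yv u b.
Proof.
have edgep_in01 a a' : 0 < edgep p q a a' < 1 by rewrite /edgep; case: eqP.
have dens_gt0 a w : w \in v |: S -> 0 < dens P1 Pm1 a (x w).
  by case: a => wS; [exact: P1_gt0 | exact: Pm1_gt0].
rewrite /site_factor /site_lik; case: eqP => [->|_] /=.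
  by apply: dens_gt0; rewrite setU11.
case uS: (u \in S).
  have /andP[e_gt0 _] := edgep_in01 b yv.
  by rewrite mulr_gt0 // dens_gt0 // in_setU1 uS orbT.
rewrite big_bool /=.
have /andP[_ lt1] := edgep_in01 true yv; have /andP[_ lt1'] := edgep_in01 false yv.
by rewrite addr_gt0 // subr_gt0.
Qed.

Lemma map_obj_factor (yv : bool) :
  map_obj P1 Pm1 p q v S x yv = 2%:R ^- n * \prod_u site_max yv u.
Proof.
rewrite /map_obj (eq_bigr _ (fun yS _ => joint_post_factor yv yS)).
apply: bigmax_ffun_prod; first by rewrite invr_ge0 exprn_ge0 // ler0n.
by move=> u b; exact/ltW/site_factor_gt0.
Qed.

Lemma site_max_gt0 (yv : bool) (u : 'I_n) : 0 < site_max yv u.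
Proof. by rewrite lt_max site_factor_gt0. Qed.

Lemma ln_site_max_ratio (u : 'I_n) :
  ln (site_max true u) - ln (site_max false u) =
  if u == v then psi P1 Pm1 (x v)
  else if u \in S then phi (psi P1 Pm1 (x u)) (ln (p / q)) else 0.
Proof.
rewrite /site_max /site_factor /site_lik; case: eqP => [->|_] /=.
  by rewrite !maxxx /psi /dens ln_div // posrE; [apply: P1_gt0 | apply: Pm1_gt0];
    rewrite setU11.
case uS: (u \in S); last by rewrite !maxxx !big_bool /edgep /= [X in _ - ln X]addrC subrr.
have uvS : u \in v |: S by rewrite in_setU1 uS orbT.
have [P1u Pm1u] := (P1_gt0 _ uvS, Pm1_gt0 _ uvS).
have [/andP[p_gt0 _] /andP[q_gt0 _]] := (p_in01, q_in01).
rewrite /dens /edgep /= !ln_max ?mulr_gt0 // !lnM ?posrE ?invr_gt0 //.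
by rewrite max_addr_sub_phi /psi ln_div ?posrE // lnV ?posrE.
Qed.

Lemma calP_ln_ratio :
  calP P1 Pm1 p q v S x =
  ln (\prod_u site_max true u) - ln (\prod_u site_max false u).
Proof.
rewrite !ln_prod; try exact: site_max_gt0.
rewrite -sumrB (eq_bigr _ (fun u _ => ln_site_max_ratio u)) (bigD1 v) //= eqxx.
congr (_ + _); rewrite big_mkcond [RHS]big_mkcond /=; apply: eq_bigr => u _.
by case: eqP => [->|]; rewrite ?(negbTE vNS).
Qed.

End Likelihood.

Theorem proposition1 (R : realType) (T : Type) (n : nat)
    (P1 Pm1 : T -> R) (p q : R) (v : 'I_n) (S : {set 'I_n}) (x : 'I_n -> T) :
  0 < p < 1 -> 0 < q < 1 ->
  v \notin S ->
  (forall w, w \in v |: S -> 0 < P1 (x w)) ->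
  (forall w, w \in v |: S -> 0 < Pm1 (x w)) ->
  map_classifier P1 Pm1 p q v S x = Num.sg (calP P1 Pm1 p q v S x).
Proof.
move=> p_in01 q_in01 vNS P1_gt0 Pm1_gt0.
have prod_gt0 yv : 0 < \prod_u site_max P1 Pm1 p q v S x yv u.
  by apply: prodr_gt0 => u _; exact: site_max_gt0.
rewrite /map_classifier !map_obj_factor // -mulrBr sgrM gtr0_sg ?mul1r; last first.
  by rewrite invr_gt0 exprn_gt0 // ltr0n.
by rewrite calP_ln_ratio // sgr_ln_sub.
Qed.
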